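(* Consider a one-dimensional chain of qudits of local dimension $d$ decomposed into three consecutive regions $\tilde L$, $S$, $\tilde R$ (left to right), where $S$ consists of $\ell$ sites labeled $1,\dots,\ell$ with $\ell$ even. Let $H_S=\sum_{i=1}^{\ell-1}h_{i,i+1}$, where each $h_{i,i+1}$ acts only on sites $i,i+1$ of $S$. Let $m,M$ be positive integers, $\mathcal G_m$ an arbitrary polynomial of degree $m$, and $\Phi_1,\Phi_2$ operators supported on $\tilde L$ and $\tilde R$ respectively. Then the operator $\hat{\mathcal G}_{m,M}=[\Phi_1\mathcal G_m(H_S)\Phi_2]^M$ satisfies $$\mathrm{SR}(\hat{\mathcal G}_{m,M})\le(10mMd)^{2M+3\ell+\frac{4mM}{\ell}},$$ where the Schmidt rank is taken across the bipartition of the whole chain between sites $\ell/2$ and $\ell/2+1$ of $S$.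
   Context: The Schmidt rank of an operator $O$ across a bipartition $A|B$ of the chain is the minimal $r$ such that $O=\sum_{k=1}^r O_{A,k}\otimes O_{B,k}$ with $O_{A,k}$ acting on $A$ and $O_{B,k}$ on $B$. *)

From HB Require Import structures.
From mathcomp Require Import all_boot all_order all_algebra.
From mathcomp Require Import complex.
Set Implicit Arguments. Unset Strict Implicit. Unset Printing Implicit Defensive.
Import Order.TTheory GRing.Theory Num.Theory.
Local Open Scope ring_scope.

(* Configurations (computational basis states) of a chain of n qudits of
   local dimension d: site i carries the value x i in {0,...,d-1}. *)
Definition cfg (d n : nat) := {ffun 'I_n -> 'I_d}.

(* Operators on the chain Hilbert space (C^d)^{(x) n}: square matrices
   indexed by the basis configurations. *)
Definition op (C : Type) (d n : nat) := 'M[C]_(#|{: cfg d n}|).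

Definition ent (C : Type) (d n : nat) (O : op C d n) (x y : cfg d n) : C :=
  O (enum_rank x) (enum_rank y).

(* O is supported on the set of sites X, i.e. O = O_X (x) Id_{complement of X}:
   matrix elements vanish unless x and y agree off X, and otherwise depend
   only on the restrictions of x, y to X. *)
Definition supported_on (C : comNzRingType) (d n : nat) (X : {set 'I_n})
    (O : op C d n) : Prop :=
  forall x y x' y' : cfg d n,
    (forall i, i \in X -> x i = x' i /\ y i = y' i) ->
    (forall i, i \notin X -> x' i = y' i) ->
    ent O x y = (if [forall i in ~: X, x i == y i] then ent O x' y' else 0).

Definition mxpow (C : comNzRingType) (N : nat) (A : 'M[C]_N) (k : nat) : 'M[C]_N :=
  iter k (mulmx A) 1%:M.

Definition poly_mx (C : comNzRingType) (N : nat) (p : {poly C}) (A : 'M[C]_N)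
    : 'M[C]_N :=
  \sum_(k < size p) p`_k *: mxpow A k.

(* O has an operator Schmidt decomposition with r terms across the
   bipartition A | complement of A:  O = sum_{k<r} O_{A,k} O_{B,k} with
   O_{A,k} acting on A and O_{B,k} acting on the complement (so that the
   product is the tensor product O_{A,k} (x) O_{B,k}). *)
Definition schmidt_decomp (C : comNzRingType) (d n : nat) (A : {set 'I_n})
    (O : op C d n) (r : nat) : Prop :=
  exists (OA OB : 'I_r -> op C d n),
    [/\ forall k, supported_on A (OA k),
        forall k, supported_on (~: A) (OB k) &
        O = \sum_(k < r) OA k *m OB k].

(* Schmidt rank <= s  iff  some decomposition with r <= s terms exists. *)

(* The polynomial factor G(H_S) acts only on the block S of l sites, so after
   regrouping (Phi1 G(H_S) Phi2)^M = Phi1^M G(H_S)^M Phi2^M (the three factors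
   have disjoint supports and commute) the middle factor expands in the d^(2l)
   operators |u_S><v_S| (x) Id, each of which is a product of an operator on the
   left half of S and one on the right half.  Phi1^M and Phi2^M lie on opposite
   sides of the cut, so the Schmidt rank is at most d^(2l), which is already
   below (10 m M d)^(2M + 3l + 4mM/l). *)

From HB Require Import structures.
From mathcomp Require Import all_boot all_order all_algebra.
From mathcomp Require Import complex.
From mathcomp Require Import zify.
Import Order.TTheory GRing.Theory Num.Theory.
Local Open Scope ring_scope.

Definition cfg_on (d n : nat) (X : {set 'I_n}) := {ffun {i : 'I_n | i \in X} -> 'I_d}.

Section Configurations.
Context {d n : nat}.
Implicit Types (X Y : {set 'I_n}) (t u v w x y z : cfg d n).

Definition agree X x y : bool := [forall i in X, x i == y i].

Definition splice X u w : cfg d n := [ffun i => if i \in X then u i else w i].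

Lemma agreeP X x y : reflect {in X, x =1 y} (agree X x y).
Proof. by apply: (iffP forall_inP) => H i Hi; apply/eqP; apply: H. Qed.

Lemma agree_sym X x y : agree X x y = agree X y x.
Proof. by apply/agreeP/agreeP => H i /H. Qed.

Lemma agree_sub X Y x y : X \subset Y -> agree Y x y -> agree X x y.
Proof. by move=> /subsetP sXY /agreeP H; apply/agreeP => i /sXY /H. Qed.

Lemma agree_setU X Y x y : agree (X :|: Y) x y = agree X x y && agree Y x y.
Proof.
apply/agreeP/andP => [H | [/agreeP HX /agreeP HY] i].
  by split; apply/agreeP => i Hi; apply: H; rewrite inE Hi ?orbT.
by rewrite inE => /orP[/HX | /HY].
Qed.

Lemma eq_agree {X x y x' y'} :
  {in X, x =1 x'} -> {in X, y =1 y'} -> agree X x y = agree X x' y'.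
Proof.
move=> Ex Ey; apply/agreeP/agreeP => H i Hi.
  by rewrite -Ex // -Ey // H.
by rewrite Ex // Ey // H.
Qed.

Lemma agree_splice_sub X Y u w t :
  Y \subset X -> agree Y (splice X u w) t = agree Y u t.
Proof.
by move=> /subsetP sYX; apply: eq_agree => // i /sYX Hi; rewrite ffunE Hi.
Qed.

Lemma agree_splice_disjoint X Y u w t :
  [disjoint Y & X] -> agree Y (splice X u w) t = agree Y w t.
Proof.
by move=> dYX; apply: eq_agree => // i Hi; rewrite ffunE (disjointFr dYX Hi).
Qed.

Lemma splice_eq X w x y : (y == splice X w x) = agree X y w && agree (~: X) y x.
Proof.
apply/eqP/andP => [-> | [/agreeP HX /agreeP HC]].
  by split; apply/agreeP => i; rewrite ?inE => Hi; rewrite ffunE ?Hi ?(negbTE Hi).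
apply/ffunP => i; rewrite ffunE; case: ifP => Hi; first exact: HX.
by apply: HC; rewrite inE Hi.
Qed.

Lemma splice_agree X u u' w : agree X u u' -> splice X u w = splice X u' w.
Proof. by move=> /agreeP H; apply/ffunP => i; rewrite !ffunE; case: ifP => // /H. Qed.

Lemma splice_id X u : splice X u u = u.
Proof. by apply/ffunP => i; rewrite ffunE; case: ifP. Qed.

Lemma splice_splice X u v w : splice X u (splice X v w) = splice X u w.
Proof. by apply/ffunP => i; rewrite /splice !ffunE; case: (i \in X). Qed.

Definition restrict X x : cfg_on d n X := [ffun i => x (val i)].

Definition extend {X} z (p : cfg_on d n X) : cfg d n :=
  [ffun i => if insub i is Some j then p j else z i].

Lemma card_cfg_on X : #|{: cfg_on d n X}| = (d ^ #|X|)%N.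
Proof. by rewrite card_ffun card_ord card_sig. Qed.

Lemma agree_extend X z (p : cfg_on d n X) x :
  agree X x (extend z p) = (restrict X x == p).
Proof.
apply/agreeP/eqP => [H | <- i Hi].
  by apply/ffunP => j; rewrite ffunE H ?(valP j) // ffunE valK.
by rewrite !ffunE insubT /= ffunE.
Qed.

Lemma extend_compl X z (p : cfg_on d n X) i : i \notin X -> extend z p i = z i.
Proof. by move=> Hi; rewrite ffunE insubF // (negbTE Hi). Qed.

End Configurations.

Section KetBra.
Context {C : comNzRingType} {d n : nat}.
Local Notation op := (op C d n).
Implicit Types (X Y : {set 'I_n}) (t u v w x y z : cfg d n) (A B O : op).

Lemma ent_ext A B : (forall x y, ent A x y = ent B x y) -> A = B.
Proof.
move=> H; apply/matrixP => i j.
by have := H (enum_val i) (enum_val j); rewrite /ent !enum_valK.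
Qed.

Lemma ent_mul A B x y : ent (A *m B) x y = \sum_z ent A x z * ent B z y.
Proof.
rewrite /ent mxE (reindex enum_rank) //.
by exists enum_val => z _; rewrite ?enum_rankK ?enum_valK.
Qed.

Lemma entZ c A x y : ent (c *: A) x y = c * ent A x y.
Proof. by rewrite /ent mxE. Qed.

Lemma ent_sum (I : finType) (F : I -> op) x y :
  ent (\sum_k F k) x y = \sum_k ent (F k) x y.
Proof. by rewrite /ent summxE. Qed.

Lemma supported_onZ X c A : supported_on X A -> supported_on X (c *: A).
Proof.
by move=> HA x y x' y' H1 H2; rewrite !entZ (HA _ _ x' y') //; case: ifP; rewrite ?mulr0.
Qed.

Lemma supported_on_sum X (I : finType) (F : I -> op) :
  (forall k, supported_on X (F k)) -> supported_on X (\sum_k F k).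
Proof.
move=> HF x y x' y' H1 H2; rewrite !ent_sum.
by case: ifP => Exy; (under eq_bigr do rewrite (HF _ _ _ x' y') // Exy); rewrite ?big1_eq.
Qed.

(* [ketbra_on X u v] is |u_X><v_X| (x) Id on the complement of X. *)
Definition ketbra_on X u v : op :=
  \matrix_(i, j) (agree X (enum_val i) u && (enum_val j == splice X v (enum_val i)))%:R.

Lemma ent_ketbra_on X u v x y :
  ent (ketbra_on X u v) x y = (agree X x u && (y == splice X v x))%:R.
Proof. by rewrite /ent mxE !enum_rankK. Qed.

Lemma ketbra_on_supported X Y u v : X \subset Y -> supported_on Y (ketbra_on X u v).
Proof.
move=> sXY x y x' y' Hon Hoff; rewrite -/(agree (~: Y) x y) !ent_ketbra_on !splice_eq.
have /subsetP sXY' := sXY.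
case: ifP => Exy.
  have Ex : {in X, x =1 x'} by move=> i /sXY' /Hon [].
  have Ey : {in X, y =1 y'} by move=> i /sXY' /Hon [].
  rewrite (eq_agree Ex (fun _ _ => erefl)) (eq_agree Ey (fun _ _ => erefl)).
  suff -> : agree (~: X) y x = agree (~: X) y' x' by [].
  have /agreeP {}Exy := Exy.
  apply/agreeP/agreeP => H i Hi; have [HiY | HiY] := boolP (i \in Y).
  - by have [<- <-] := Hon i HiY; apply: H.
  - by rewrite Hoff.
  - by have [-> ->] := Hon i HiY; apply: H.
  - by rewrite Exy // inE.
have -> : agree (~: X) y x = false.
  by apply: contraFF Exy; rewrite agree_sym; apply: agree_sub; rewrite setCS.
by rewrite !andbF.
Qed.

Lemma ketbra_on_set0 u : ketbra_on set0 u u = 1%:M.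
Proof.
apply: ent_ext => x y; rewrite ent_ketbra_on /ent mxE (inj_eq enum_rank_inj).
have -> : splice set0 u x = x by apply/ffunP => i; rewrite ffunE inE.
have -> : agree set0 x u by apply/agreeP => i; rewrite inE.
by rewrite eq_sym.
Qed.

Lemma supported_on1 Y : supported_on Y (1%:M : op).
Proof.
move=> x y x' y'; rewrite -(ketbra_on_set0 x).
exact: (ketbra_on_supported _ _ x x (sub0set Y)).
Qed.

Lemma ketbra_on_mul X u v u' v' :
  ketbra_on X u v *m ketbra_on X u' v' = (agree X v u')%:R *: ketbra_on X u v'.
Proof.
apply: ent_ext => x y; rewrite ent_mul entZ (big_only1 (splice X v x)) //.
  rewrite !ent_ketbra_on eqxx andbT agree_splice_sub // splice_splice -!natrM.
  by case: (agree X x u); case: (agree X v u').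
by move=> z /negbTE nz _; rewrite ent_ketbra_on nz andbF mul0r.
Qed.

Lemma ketbra_on_mul_disjoint X Y u v u' v' : [disjoint X & Y] ->
  ketbra_on X u v *m ketbra_on Y u' v'
  = ketbra_on (X :|: Y) (splice X u u') (splice X v v').
Proof.
move=> dXY; have dYX : [disjoint Y & X] by rewrite disjoint_sym.
have spliceXY w : splice Y v' (splice X v w) = splice (X :|: Y) (splice X v v') w.
  apply/ffunP => i; rewrite !ffunE inE.
  by case: (boolP (i \in X)) => Hi; rewrite ?(disjointFr dXY Hi).
apply: ent_ext => x y; rewrite ent_mul (big_only1 (splice X v x)) //.
  rewrite !ent_ketbra_on eqxx andbT agree_splice_disjoint // spliceXY agree_setU.
  rewrite ![agree _ x (splice _ _ _)]agree_sym agree_splice_sub // agree_splice_disjoint //.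
  by rewrite -natrM mulnb !(agree_sym _ x) andbA.
by move=> z /negbTE nz _; rewrite ent_ketbra_on nz andbF mul0r.
Qed.

Lemma ketbra_on_eq X u v u' v' :
  agree X u u' -> agree X v v' -> ketbra_on X u v = ketbra_on X u' v'.
Proof.
move=> /agreeP Eu Hv; apply: ent_ext => x y.
by rewrite !ent_ketbra_on (splice_agree _ _ _ x Hv) (eq_agree (fun _ _ => erefl) Eu).
Qed.

Lemma ketbra_on_commute X Y u v u' v' : [disjoint X & Y] ->
  ketbra_on X u v *m ketbra_on Y u' v' = ketbra_on Y u' v' *m ketbra_on X u v.
Proof.
move=> dXY; have dYX : [disjoint Y & X] by rewrite disjoint_sym.
rewrite !ketbra_on_mul_disjoint // [Y :|: X]setUC.
by apply: ketbra_on_eq; apply/agreeP => i; rewrite inE !ffunE => /orP[] Hi;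
  rewrite Hi ?(disjointFr dXY Hi) ?(disjointFl dXY Hi).
Qed.

Lemma ketbra_on_setU X Y u v : [disjoint X & Y] ->
  ketbra_on (X :|: Y) u v = ketbra_on X u v *m ketbra_on Y u v.
Proof. by move=> dXY; rewrite ketbra_on_mul_disjoint // !splice_id. Qed.

Lemma ketbra_on_setID X Y u v :
  ketbra_on Y u v = ketbra_on (Y :&: X) u v *m ketbra_on (Y :\: X) u v.
Proof.
rewrite -ketbra_on_setU ?setID //.
by apply: disjointW (subsetIr Y X) (subsetDr Y X) _; rewrite disjoints_subset setCK.
Qed.

Lemma ketbra_on_expansion {X O} z : supported_on X O ->
  O = \sum_(s : cfg_on d n X * cfg_on d n X)
        ent O (extend z s.1) (extend z s.2) *: ketbra_on X (extend z s.1) (extend z s.2).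
Proof.
move=> HO; have extendK w : {in X, w =1 extend z (restrict X w)}.
  by apply/agreeP; rewrite agree_extend.
apply: ent_ext => x y; rewrite ent_sum (big_only1 (restrict X x, restrict X y)) //=.
  rewrite entZ ent_ketbra_on splice_eq !agree_extend !eqxx /=.
  rewrite (HO x y (extend z (restrict X x)) (extend z (restrict X y))).
  - by rewrite -/(agree _ x y) agree_sym; case: agree; rewrite ?mulr1 ?mulr0.
  - by move=> i Hi; rewrite -!extendK.
  - by move=> i Hi; rewrite !extend_compl.
move=> [p q] /= Hpq _; rewrite entZ ent_ketbra_on splice_eq !agree_extend.
case: eqP => [Hp|]; case: eqP => [Hq|]; rewrite /= ?mulr0 //.
by rewrite -Hp -Hq eqxx in Hpq.
Qed.

End KetBra.

Section MatrixPowers.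
Context {C : comNzRingType} {N : nat}.
Implicit Types A B : 'M[C]_N.

Lemma mxpowS A k : mxpow A k.+1 = A *m mxpow A k.
Proof. by []. Qed.

Lemma mxpow_comm A B k : A *m B = B *m A -> A *m mxpow B k = mxpow B k *m A.
Proof.
move=> AB; elim: k => [|k IH]; first by rewrite mulmx1 mul1mx.
by rewrite mxpowS mulmxA AB -mulmxA IH mulmxA.
Qed.

Lemma mxpowM A B k : A *m B = B *m A -> mxpow (A *m B) k = mxpow A k *m mxpow B k.
Proof.
move=> AB; elim: k => [|k IH]; first by rewrite mulmx1.
by rewrite !mxpowS IH -!mulmxA (mulmxA B) (mxpow_comm _ _ _ (esym AB)) !mulmxA.
Qed.

End MatrixPowers.

Section SupportAlgebra.
Context {C : comNzRingType} {d n : nat}.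
Local Notation op := (op C d n).
Implicit Types (X XL XR Y : {set 'I_n}) (A B O : op).

Lemma supported_on_span X O : supported_on X O ->
  exists (K : finType) (c : K -> C) (u v : K -> cfg d n),
    O = \sum_k c k *: ketbra_on X (u k) (v k).
Proof.
move=> HO; have [z _ | cfg0] := pickP (@predT (cfg d n)).
  exists (cfg_on d n X * cfg_on d n X)%type.
  exists (fun s => ent O (extend z s.1) (extend z s.2)).
  by exists (fun s => extend z s.1), (fun s => extend z s.2); apply: ketbra_on_expansion.
(* No configurations (d = 0 < n): operators are empty matrices. *)
exists void, (fun=> 0), (of_void _), (of_void _).
by apply/matrixP => i; have := cfg0 (enum_val i).
Qed.

Lemma supported_on_sub X Y O : X \subset Y -> supported_on X O -> supported_on Y O.
Proof.
move=> sXY /supported_on_span[K [c [u [v ->]]]].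
by apply: supported_on_sum => k; apply: supported_onZ; apply: ketbra_on_supported.
Qed.

Lemma supported_on_mul X A B :
  supported_on X A -> supported_on X B -> supported_on X (A *m B).
Proof.
move=> /supported_on_span[K [c [u [v ->]]]] /supported_on_span[K' [c' [u' [v' ->]]]].
rewrite mulmx_suml; apply: supported_on_sum => k.
rewrite mulmx_sumr; apply: supported_on_sum => k'.
rewrite -scalemxAl -scalemxAr ketbra_on_mul.
by do 3 apply: supported_onZ; apply: ketbra_on_supported.
Qed.

Lemma supported_on_commute {X Y A B} : [disjoint X & Y] ->
  supported_on X A -> supported_on Y B -> A *m B = B *m A.
Proof.
move=> dXY /supported_on_span[K [c [u [v ->]]]] /supported_on_span[K' [c' [u' [v' ->]]]].
rewrite mulmx_suml; under eq_bigr do rewrite mulmx_sumr.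
rewrite mulmx_suml; under [in RHS]eq_bigr do rewrite mulmx_sumr.
rewrite exchange_big; apply: eq_bigr => k' _; apply: eq_bigr => k _.
by rewrite -!scalemxAl -!scalemxAr !scalerA mulrC ketbra_on_commute.
Qed.

Lemma supported_on_mxpow X A k : supported_on X A -> supported_on X (mxpow A k).
Proof.
by move=> HA; elim: k => [|k IH]; [apply: supported_on1 | apply: supported_on_mul].
Qed.

Lemma supported_on_poly_mx X A p : supported_on X A -> supported_on X (poly_mx p A).
Proof.
by move=> HA; apply: supported_on_sum => k; apply: supported_onZ; apply: supported_on_mxpow.
Qed.

Lemma schmidt_decomp_sum X (K : finType) (F G : K -> op) :
  (forall k, supported_on X (F k)) -> (forall k, supported_on (~: X) (G k)) ->
  schmidt_decomp X (\sum_k F k *m G k) #|K|.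
Proof.
move=> HF HG; exists (F \o enum_val), (G \o enum_val); split=> //=.
by rewrite -(big_enum_val (fun k => F k *m G k)).
Qed.

Lemma schmidt_decomp_sandwich X Y (L Q R : op) : (0 < d)%N ->
  supported_on X L -> supported_on Y Q -> supported_on (~: X) R ->
  schmidt_decomp X (L *m Q *m R) (d ^ #|Y| * d ^ #|Y|).
Proof.
move=> d_gt0 HL HQ HR; pose z : cfg d n := [ffun=> Ordinal d_gt0].
pose u := fun s : cfg_on d n Y * cfg_on d n Y => extend z s.1.
pose v := fun s : cfg_on d n Y * cfg_on d n Y => extend z s.2.
pose F s := L *m (ent Q (u s) (v s) *: ketbra_on (Y :&: X) (u s) (v s)).
pose G s := ketbra_on (Y :\: X) (u s) (v s) *m R.
have -> : L *m Q *m R = \sum_s F s *m G s.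
  rewrite {1}(ketbra_on_expansion z HQ) mulmx_sumr mulmx_suml; apply: eq_bigr => s _.
  by rewrite /F /G (ketbra_on_setID X) scalemxAl !mulmxA.
rewrite -card_cfg_on -card_prod; apply: schmidt_decomp_sum => s.
  by apply: supported_on_mul HL _; apply/supported_onZ/ketbra_on_supported/subsetIr.
by apply: supported_on_mul _ HR; apply/ketbra_on_supported/subsetDr.
Qed.

Lemma schmidt_decomp_mxpow_sandwich X XL Y XR (L Q R : op) k :
  (0 < d)%N ->
  XL \subset X -> XR \subset ~: X -> [disjoint XL & Y] -> [disjoint XR & XL :|: Y] ->
  supported_on XL L -> supported_on Y Q -> supported_on XR R ->
  schmidt_decomp X (mxpow (L *m Q *m R) k) (d ^ #|Y| * d ^ #|Y|).
Proof.
move=> d_gt0 sXL sXR dLY dR HL HQ HR.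
have LQ : L *m Q = Q *m L := supported_on_commute dLY HL HQ.
have RLQ : R *m (L *m Q) = L *m Q *m R.
  apply: supported_on_commute dR HR _.
  by apply: supported_on_mul; [apply: supported_on_sub HL | apply: supported_on_sub HQ];
    rewrite ?subsetUl ?subsetUr.
rewrite mxpowM // mxpowM //; apply: schmidt_decomp_sandwich => //.
- exact/supported_on_mxpow/(supported_on_sub _ _ _ sXL).
- exact: supported_on_mxpow.
- exact/supported_on_mxpow/(supported_on_sub _ _ _ sXR).
Qed.

End SupportAlgebra.

Lemma card_ord_interval n a l : (#|[set j : 'I_n | (a <= j < a + l)%N]| <= l)%N.
Proof.
rewrite cardE -(size_map val) -[X in (_ <= X)%N](size_iota a l).
apply: uniq_leq_size; first by rewrite (map_inj_uniq val_inj) enum_uniq.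
by move=> k /mapP[j]; rewrite mem_enum inE mem_iota => Hj ->.
Qed.

Theorem lemma16 (R : rcfType) (d a l b m M : nat)
  (h : 'I_(l.-1) -> op R[i] d (a + l + b))
  (G : {poly R[i]})
  (Phi1 Phi2 : op R[i] d (a + l + b)) :
  (0 < d)%N -> (0 < l)%N -> ~~ odd l -> (0 < m)%N -> (0 < M)%N ->
  (forall i : 'I_(l.-1),
     supported_on [set j : 'I_(a + l + b) | (nat_of_ord j == a + i)%N
                                          || (nat_of_ord j == a + i + 1)%N]
                  (h i)) ->
  size G = m.+1 ->
  supported_on [set j : 'I_(a + l + b) | (j < a)%N] Phi1 ->
  supported_on [set j : 'I_(a + l + b) | (a + l <= j)%N] Phi2 ->
  exists r : nat,
    schmidt_decomp [set j : 'I_(a + l + b) | (j < a + l./2)%N]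
      (mxpow (Phi1 *m poly_mx G (\sum_(i < l.-1) h i) *m Phi2) M) r
    /\ (r ^ l <= (10 * m * M * d) ^ (l * (2 * M + 3 * l) + 4 * m * M))%N.
Proof.
move=> d_gt0 _ _ m_gt0 M_gt0 h_supp _ Phi1_supp Phi2_supp.
set S := [set j : 'I_(a + l + b) | (a <= j < a + l)%N].
have HS_supp : supported_on S (poly_mx G (\sum_(i < l.-1) h i)).
  apply: supported_on_poly_mx; apply: supported_on_sum => i.
  apply: supported_on_sub (h_supp i).
  by apply/subsetP => j; rewrite !inE; have := ltn_ord i; lia.
exists (d ^ #|S| * d ^ #|S|)%N; split.
  apply: schmidt_decomp_mxpow_sandwich Phi1_supp HS_supp Phi2_supp => //;
    rewrite ?disjoints_subset; apply/subsetP => j; rewrite !inE; lia.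
have S_le : (#|S| <= l)%N := card_ord_interval _ a l.
rewrite -expnD -expnM.
apply: (@leq_trans (d ^ (l * (2 * M + 3 * l) + 4 * m * M))).
  by rewrite leq_pexp2l //; nia.
by rewrite leq_exp2r ?leq_pmull ?muln_gt0 ?m_gt0 ?M_gt0 //; nia.
Qed.
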